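(* Let $D$ be a Dyck path of semilength $n$, let $\mathcal N$ be the set of $k\in\{1,\dots,n\}$ such that row $k$ contains no valley of $D$, and let $\pi$ be the permutation associated with $D$ by the Billey–Jockusch–Stanley bijection. Then $k\in\mathcal N$ if and only if $\pi^{-1}(k)\ge k$, i.e. if and only if $\pi^{-1}(k)$ is a fixpoint or a deficiency of $\pi$.
   Context: Work in an $n\times n$ array of unit cells; the cell $(i,j)$ is the one in column $i$ (columns numbered $1,\dots,n$ from left to right) and row $j$ (rows numbered $1,\dots,n$ from bottom to top), i.e. the square $[i-1,i]\times[j-1,j]$. A Dyck path of semilength $n$ is a lattice path from $(0,0)$ to $(n,n)$ with unit north and east steps that never goes below the line $y=x$. A valley of $D$ is an east step immediately followed by a north step; if the east step is the $k$-th east step and the north step is the $\ell$-th north step, the valley is at position $(k,\ell)$, the cell enclosed by these two steps (it lies in row $\ell$). Billey–Jockusch–Stanley bijection: put a cross in every valley cell of $D$; then, for the columns $i=1,2,\dots,n$ in this order, if column $i$ does not yet contain a cross, put a cross in the lowest cell of column $i$ whose row does not yet contain a cross. The crosses form a permutation matrix, and $\pi(i)$ is the row of the cross in column $i$. An index $m$ is a fixpoint of $\pi$ if $\pi(m)=m$ and a deficiency if $\pi(m)<m$. *)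

From mathcomp Require Import all_boot.
Set Implicit Arguments. Unset Strict Implicit. Unset Printing Implicit Defensive.

(* A lattice path is a sequence of steps: true = north step, false = east step. *)
Definition nsteps (p : seq bool) : nat := count id p.
Definition esteps (p : seq bool) : nat := count negb p.

Definition dyck (n : nat) (p : seq bool) : Prop :=
  size p = 2 * n /\ nsteps p = n /\
  forall t, esteps (take t p) <= nsteps (take t p).

(* Valleys: an east step at index t followed by a north step at index t+1.
   If it is the k-th east step and the l-th north step, the valley is at
   position (k, l) (column k, row l). *)
Definition valleys (p : seq bool) : seq (nat * nat) :=
  [seq (esteps (take t.+1 p), nsteps (take t.+2 p))
   | t <- iota 0 (size p).-1 & (~~ nth false p t) && nth false p t.+1].

Definition valley_rows (p : seq bool) : seq nat := map snd (valleys p).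

Definition valley_in_col (p : seq bool) (i : nat) : option nat :=
  let v := [seq x <- valleys p | x.1 == i] in
  if v is x :: _ then Some x.2 else None.

Definition lowest_free (n : nat) (used : seq nat) : nat :=
  head 0 [seq r <- iota 1 n | r \notin used].

(* Billey–Jockusch–Stanley: process columns in order; [used] is the set of
   rows already containing a cross. Returns the rows of the crosses. *)
Fixpoint bjs_build (n : nat) (p : seq bool) (cols used : seq nat) : seq nat :=
  match cols with
  | [::] => [::]
  | i :: cs =>
      match valley_in_col p i with
      | Some r => r :: bjs_build n p cs used
      | None => let r := lowest_free n used in r :: bjs_build n p cs (r :: used)
      end
  end.

(* pi(i) = row of the cross in column i, for 1 <= i <= n. *)
Definition bjs_perm (n : nat) (p : seq bool) (i : nat) : nat :=
  nth 0 (bjs_build n p (iota 1 n) (valley_rows p)) i.-1.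

From mathcomp Require Import all_boot zify.

Set Implicit Arguments.
Unset Strict Implicit.
Unset Printing Implicit Defensive.

(* A valley in column c and row r has c < r, and distinct valleys have
   distinct columns and distinct rows.  Hence among 1..a there are at most as
   many valley rows as valley columns, with equality for a = n.  The BJS
   construction sends the valley-free columns, in increasing order, onto the
   valley-free rows in increasing order.  If k is the (j+1)-st valley-free
   row, then by the inequality at most j valley-free columns lie left of k,
   while there are more than j in total; so the (j+1)-st valley-free column m
   satisfies m >= k and pi(m) = k.  Conversely a valley column is sent
   strictly above the diagonal, so pi(m) <= m forces m to be valley-free and
   pi(m) to be a valley-free row. *)

Lemma count_take_mono (T : Type) (P : pred T) (s : seq T) a b :
  a <= b -> count P (take a s) <= count P (take b s).
Proof. by move=> ab; rewrite -(subnKC ab) takeD count_cat leq_addr. Qed.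

Lemma count_take_nth (T : Type) (x0 : T) (P : pred T) (s : seq T) t :
  t < size s -> count P (take t.+1 s) = count P (take t s) + P (nth x0 s t).
Proof. by move=> ht; rewrite (take_nth x0 ht) -cats1 count_cat /= addn0. Qed.

Lemma count_mem_iota (s : seq nat) m a : uniq s ->
  count (mem s) (iota m a) = count (fun x => m <= x < m + a) s.
Proof.
move=> us; rewrite -!size_filter; apply/perm_size/uniq_perm.
- by rewrite filter_uniq ?iota_uniq.
- by rewrite filter_uniq.
by move=> x; rewrite !mem_filter mem_iota andbC.
Qed.

Lemma count_iota_mono (f : pred nat) m a b :
  a <= b -> count f (iota m a) <= count f (iota m b).
Proof. by move=> ab; rewrite -(subnKC ab) iotaD count_cat leq_addr. Qed.

Lemma sub_in_count (T : eqType) (a1 a2 : pred T) (s : seq T) :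
  {in s, subpred a1 a2} -> count a1 s <= count a2 s.
Proof.
move=> sub12; rewrite (@eq_in_count _ a1 (predI a1 a2)); last first.
  by move=> x xs /=; case a1x: (a1 x); rewrite // (sub12 x xs a1x).
by apply: sub_count => x /andP [].
Qed.

Lemma count_notin (T : eqType) (s t : seq T) :
  count (fun x => x \notin s) t = size t - count (mem s) t.
Proof. by rewrite -(count_predC (mem s) t) addKn. Qed.

Lemma exists_count_iota (f : pred nat) j a b :
  count f (iota 1 a) <= j < count f (iota 1 b) ->
  exists d, [/\ a <= d < b, f d.+1 & count f (iota 1 d) = j].
Proof.
elim: b => [|b IHb] /andP [ge_j lt_j]; first by rewrite ltn0 in lt_j.
have countS : count f (iota 1 b.+1) = count f (iota 1 b) + f b.+1.
  by rewrite -[b.+1]addn1 iotaD count_cat /= add1n addn0 addn1.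
case: (ltnP j (count f (iota 1 b))) => [lt_jb | le_bj].
  have /IHb [d [/andP [ad db] fd cd]] : count f (iota 1 a) <= j < count f (iota 1 b).
    by rewrite ge_j.
  by exists d; rewrite ad ltnW.
have fb : f b.+1 by move: lt_j; rewrite countS; case: (f b.+1); lia.
have cb : count f (iota 1 b) = j by move: lt_j; rewrite countS fb; lia.
exists b; split=> //; rewrite ltnSn andbT leqNgt; apply/negP => lt_ba.
by have := @count_iota_mono f 1 _ _ lt_ba; rewrite countS fb; lia.
Qed.

Definition valley_steps (p : seq bool) : seq nat :=
  [seq t <- iota 0 (size p).-1 | (~~ nth false p t) && nth false p t.+1].

Definition valley_cols (p : seq bool) : seq nat := map fst (valleys p).

Lemma valleysE (p : seq bool) : valleys p =
  [seq (esteps (take t.+1 p), nsteps (take t.+2 p)) | t <- valley_steps p].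
Proof. by []. Qed.

Lemma valley_stepP (p : seq bool) t : t \in valley_steps p ->
  [/\ t.+1 < size p, nth false p t = false & nth false p t.+1].
Proof.
rewrite mem_filter mem_iota add0n => /andP [/andP [/negPf -> ->] lt_t].
by split=> //; rewrite -ltn_predRL.
Qed.

Lemma valley_step_counts (p : seq bool) t : t \in valley_steps p ->
  [/\ esteps (take t.+1 p) = (esteps (take t p)).+1,
      nsteps (take t.+1 p) = nsteps (take t p) &
      nsteps (take t.+2 p) = (nsteps (take t.+1 p)).+1].
Proof.
case/valley_stepP => lt_t Et Nt; have lt_t' := ltnW lt_t.
rewrite /esteps /nsteps !(count_take_nth false _ lt_t).
rewrite !(count_take_nth false _ lt_t') Et Nt.
by split; rewrite /= ?addn0 ?addn1.
Qed.

Lemma sorted_valley_steps (p : seq bool) : sorted ltn (valley_steps p).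
Proof. exact/sorted_filter/iota_ltn_sorted/ltn_trans. Qed.

Lemma uniq_valley_cols (p : seq bool) : uniq (valley_cols p).
Proof.
rewrite /valley_cols valleysE -map_comp.
apply: (sorted_uniq ltn_trans ltnn).
apply: (homo_sorted_in (e := ltn) _ (allss _) (sorted_valley_steps p)).
move=> t t' _ /valley_step_counts [E _ _] lt_tt' /=.
by rewrite E ltnS; apply: count_take_mono.
Qed.

Lemma uniq_valley_rows (p : seq bool) : uniq (valley_rows p).
Proof.
rewrite /valley_rows valleysE -map_comp.
apply: (sorted_uniq ltn_trans ltnn).
apply: (homo_sorted_in (e := ltn) _ (allss _) (sorted_valley_steps p)).
move=> t t' _ /valley_step_counts [_ _ E] lt_tt' /=.
by rewrite E ltnS; apply: count_take_mono.
Qed.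

Lemma valley_bounds n (p : seq bool) x : dyck n p -> x \in valleys p ->
  0 < x.1 < x.2 /\ x.2 <= n.
Proof.
case=> _ [np prefix]; rewrite valleysE => /mapP [t tV ->] /=.
have [E1 N1 N2] := valley_step_counts tV.
split; first by have := prefix t.+1; rewrite E1 N2 N1; lia.
by rewrite -np /nsteps -{2}(cat_take_drop t.+2 p) count_cat leq_addr.
Qed.

Section ValleyCounts.

Variables (n : nat) (p : seq bool).
Hypothesis dyck_p : dyck n p.

Lemma valley_rows_le_cols a :
  count (mem (valley_rows p)) (iota 1 a) <= count (mem (valley_cols p)) (iota 1 a).
Proof.
rewrite !count_mem_iota ?uniq_valley_rows ?uniq_valley_cols //.
rewrite !(count_map _ _ (valleys p)).
by apply: sub_in_count => x /(valley_bounds dyck_p) /=; lia.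
Qed.

Lemma valley_rows_eq_cols :
  count (mem (valley_rows p)) (iota 1 n) = count (mem (valley_cols p)) (iota 1 n).
Proof.
rewrite !count_mem_iota ?uniq_valley_rows ?uniq_valley_cols //.
rewrite !(count_map _ _ (valleys p)) !(@eq_in_count _ _ predT) //.
  by move=> x /(valley_bounds dyck_p) /=; lia.
by move=> x /(valley_bounds dyck_p) /=; lia.
Qed.

End ValleyCounts.

Definition free_rows (n : nat) (p : seq bool) : seq nat :=
  [seq r <- iota 1 n | r \notin valley_rows p].

Variant valley_in_col_spec (p : seq bool) (i : nat) : option nat -> Type :=
  | ValleyInCol r of (i, r) \in valleys p : valley_in_col_spec p i (Some r)
  | NoValleyInCol of i \notin valley_cols p : valley_in_col_spec p i None.

Lemma valley_in_colP (p : seq bool) i : valley_in_col_spec p i (valley_in_col p i).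
Proof.
rewrite /valley_in_col; case E: [seq x <- valleys p | x.1 == i] => [|x v].
  constructor; apply/mapP => -[y yV iy].
  have : y \in [seq x <- valleys p | x.1 == i] by rewrite mem_filter -iy eqxx.
  by rewrite E.
have : x \in [seq x <- valleys p | x.1 == i] by rewrite E mem_head.
by rewrite mem_filter => /andP [/eqP <-]; case: x {E}; constructor.
Qed.

Lemma lowest_free_step n used :
  [seq r <- iota 1 n | r \notin lowest_free n used :: used] =
  behead [seq r <- iota 1 n | r \notin used].
Proof.
have -> : [seq r <- iota 1 n | r \notin lowest_free n used :: used] =
    [seq r <- [seq r <- iota 1 n | r \notin used] | r != lowest_free n used].
  by rewrite -filter_predI; apply: eq_filter => r; rewrite /= inE negb_or andbC.
rewrite /lowest_free; have := filter_uniq (fun r => r \notin used) (iota_uniq 1 n).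
case: [seq r <- iota 1 n | r \notin used] => [|x s] //= /andP [x_s _].
rewrite eqxx; apply/all_filterP/allP => y ys /=.
by apply: contraNneq x_s => <-.
Qed.

Lemma bjs_build_nth n p cs used t : t < size cs ->
  nth 0 (bjs_build n p cs used) t =
  if valley_in_col p (nth 0 cs t) is Some r then r
  else nth 0 [seq r <- iota 1 n | r \notin used]
         (count (fun i => i \notin valley_cols p) (take t cs)).
Proof.
elim: cs used t => [|i cs IHcs] used [|t] //= lt_t.
  by case: valley_in_colP.
case: valley_in_colP => [r /(map_f fst) i_col | i_free] /=; rewrite IHcs //.
  by rewrite i_col.
by rewrite lowest_free_step nth_behead i_free.
Qed.

Lemma bjs_permE n p m : 0 < m <= n ->
  bjs_perm n p m =
  if valley_in_col p m is Some r then r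
  else nth 0 (free_rows n p) (count (fun i => i \notin valley_cols p) (iota 1 m.-1)).
Proof.
move=> /andP [m_gt0 le_mn]; rewrite /bjs_perm bjs_build_nth ?size_iota; last lia.
rewrite nth_iota; last lia.
by rewrite add1n prednK // take_iota (minn_idPl (leq_trans (leq_pred m) le_mn)).
Qed.

Section BJSFixpointsAndDeficiencies.

Variables (n : nat) (p : seq bool).
Hypothesis dyck_p : dyck n p.

Lemma bjs_perm_ge_notin_valley_rows m k : 0 < m <= n -> 0 < k ->
  bjs_perm n p m = k -> k <= m -> k \notin valley_rows p.
Proof.
move=> m_range + eq_k; rewrite -eq_k bjs_permE //.
case: valley_in_colP => [r mrV | _] k_gt0 le_km.
  have [/andP [_ lt_mr] _] := valley_bounds dyck_p mrV.
  by have := leq_trans lt_mr le_km; rewrite ltnn.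
set j := count _ _ in k_gt0 *.
have [lt_j | le_j] := ltnP j (size (free_rows n p)).
  by have := mem_nth 0 lt_j; rewrite mem_filter => /andP [].
by rewrite nth_default in k_gt0.
Qed.

Lemma bjs_perm_preimage_ge k : 0 < k <= n -> k \notin valley_rows p ->
  exists m, [/\ 0 < m <= n, bjs_perm n p m = k & k <= m].
Proof.
move=> /andP [k_gt0 le_kn] k_free.
pose j := count (fun r => r \notin valley_rows p) (iota 1 k.-1).
have iota_k : iota 1 n = iota 1 k.-1 ++ k :: iota k.+1 (n - k).
  by rewrite {1}(_ : n = k.-1 + (n - k).+1) ?iotaD ?add1n ?prednK //; lia.
have free_j : nth 0 (free_rows n p) j = k.
  by rewrite /free_rows iota_k filter_cat nth_cat size_filter ltnn subnn /= k_free.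
have free_gt_j : j < count (fun r => r \notin valley_rows p) (iota 1 n).
  by rewrite iota_k count_cat /= k_free add1n addnS ltnS leq_addr.
have bounds_j : count (fun i => i \notin valley_cols p) (iota 1 k.-1) <= j <
                count (fun i => i \notin valley_cols p) (iota 1 n).
  move: free_gt_j; rewrite /j !count_notin !size_iota.
  have := valley_rows_le_cols dyck_p k.-1; have := valley_rows_eq_cols dyck_p; lia.
have [d [/andP [le_kd lt_dn] d_free cnt_d]] := exists_count_iota bounds_j.
exists d.+1; split; [lia | | lia].
rewrite bjs_permE; last lia.
case: valley_in_colP => [r /(map_f fst) d_col | _] /=; last by rewrite cnt_d.
by rewrite d_col in d_free.
Qed.

End BJSFixpointsAndDeficiencies.

Theorem mainTheorem5 (n : nat) (D : seq bool) :
  dyck n D ->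
  forall k, 1 <= k <= n ->
    (k \notin valley_rows D) <->
    (exists m, [/\ 1 <= m <= n, bjs_perm n D m = k & k <= m]).
Proof.
move=> dyck_D k k_range; split; first exact: bjs_perm_preimage_ge.
case/andP: k_range => k_gt0 _ [m [m_range pi_m le_km]].
exact: (bjs_perm_ge_notin_valley_rows dyck_D m_range k_gt0 pi_m le_km).
Qed.
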